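(* Let $q\ge5$ and $\mu\in\mathbb{F}_q\setminus\{0,1\}$. Let $\ell_\mu$ be the line through $R_{\mu,0}=\mathbf{P}(0,\mu,0,1)$ and $R_{\mu,\infty}=\mathbf{P}(1,0,1,0)$, so $\ell_\mu=\{R_{\mu,\gamma}:\gamma\in\mathbb{F}_q\}\cup\{R_{\mu,\infty}\}$ with $R_{\mu,\gamma}=\mathbf{P}(\gamma,\mu,\gamma,1)$. Then: (i) $\ell_\mu$ has no point on $\mathscr{C}$; (ii) $\ell_\mu$ is not a chord of $\mathscr{C}$; (iii) $\ell_\mu$ is contained in neither $\pi_{osc}(\infty)$ nor $\pi_{osc}(0)$; more precisely $R_{\mu,\gamma}\notin\pi_{osc}(\infty)$ for all $\gamma\in\mathbb{F}_q$, $R_{\mu,\infty}\notin\pi_{osc}(0)$, and $R_{\mu,\infty}\in\pi_{osc}(\infty)$; (iv) if $R_{\mu,\infty}\notin\pi_{osc}(t)$ for all $t\in\mathbb{F}_q$, then $\ell_\mu$ is not contained in any osculating plane; (v) for $t\in\mathbb{F}_q$, $R_{\mu,\infty}\in\pi_{osc}(t)$ if and only if $3t^2+1=0$.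
   Context: Points of $\mathrm{PG}(3,q)$ are written $\mathbf{P}(x_0,x_1,x_2,x_3)$ over $\mathbb{F}_q$. For $t$ in $\mathbb{F}_q$ or $\mathbb{F}_{q^2}$ put $P(t)=\mathbf{P}(t^3,t^2,t,1)$ and $P(\infty)=\mathbf{P}(1,0,0,0)$; the twisted cubic is $\mathscr{C}=\{P(t):t\in\mathbb{F}_q\cup\{\infty\}\}$. The osculating plane $\pi_{osc}(t)$ is $x_0-3tx_1+3t^2x_2-t^3x_3=0$ for $t\in\mathbb{F}_q$ and $\pi_{osc}(\infty)$ is $x_3=0$. A chord of $\mathscr{C}$ is a real chord (line joining two distinct points of $\mathscr{C}$), a tangent (line through $P(t)$ and $\mathbf{P}(3t^2,2t,1,0)$ for $t\in\mathbb{F}_q$, or through $P(\infty)$ and $\mathbf{P}(0,1,0,0)$), or an imaginary chord (line of $\mathrm{PG}(3,q)$ joining $P(t_1),P(t_2)$ with $t_1,t_2=t_1^q\in\mathbb{F}_{q^2}\setminus\mathbb{F}_q$). *)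

From HB Require Import structures.
From mathcomp Require Import all_boot all_order all_algebra all_field.
Set Implicit Arguments. Unset Strict Implicit. Unset Printing Implicit Defensive.
Import GRing.Theory.
Local Open Scope ring_scope.

(* Vectors of F^4 (homogeneous coordinates of PG(3,q)) are row vectors 'rV[R]_4. *)
Definition vec4 (R : ringType) (a b c d : R) : 'rV[R]_4 :=
  \row_(i < 4) nth 0 [:: a; b; c; d] i.

Definition co (R : ringType) (x : 'rV[R]_4) (i : nat) : R := x ord0 (inord i).

(* P(t) = P(t^3,t^2,t,1), and P(infinity) = P(1,0,0,0); parameters in option R,
   None standing for infinity *)
Definition Pt (R : ringType) (t : R) : 'rV[R]_4 := vec4 (t ^+ 3) (t ^+ 2) t 1.
Definition cpt (R : ringType) (s : option R) : 'rV[R]_4 :=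
  match s with Some t => Pt t | None => vec4 1 0 0 0 end.

(* second point defining the tangent at P(s) *)
Definition tdir (R : ringType) (s : option R) : 'rV[R]_4 :=
  match s with Some t => vec4 (3 * t ^+ 2) (2 * t) 1 0 | None => vec4 0 1 0 0 end.

(* A point of PG(3,q) is a nonzero vector up to a nonzero scalar; a line (or any
   subspace) is represented by the set of nonzero vectors representing its points.
   span2 u v = the set of representatives of points of the line joining P(u),P(v). *)
Definition span2 (R : fieldType) (u v : 'rV[R]_4) (x : 'rV[R]_4) : Prop :=
  x != 0 /\ exists a b : R, x = a *: u + b *: v.

Definition same_set (R : fieldType) (A B : 'rV[R]_4 -> Prop) : Prop :=
  forall x, A x <-> B x.

Definition osc (R : ringType) (s : option R) (x : 'rV[R]_4) : Prop :=
  match s with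
  | Some t => co x 0 - 3 * t * co x 1 + 3 * t ^+ 2 * co x 2 - t ^+ 3 * co x 3 = 0
  | None => co x 3 = 0
  end.

Definition real_chord (F : fieldType) (l : 'rV[F]_4 -> Prop) : Prop :=
  exists s1 s2 : option F, s1 <> s2 /\ same_set l (span2 (cpt s1) (cpt s2)).

Definition tangent_line (F : fieldType) (l : 'rV[F]_4 -> Prop) : Prop :=
  exists s : option F, same_set l (span2 (cpt s) (tdir s)).

(* imaginary chord, relative to a quadratic extension L of F = F_q:
   the F-rational points of the L-line joining P(t1), P(t2), t2 = t1^q,
   t1 in L \ F. *)
Definition imag_chord (F : finFieldType) (L : fieldExtType F)
  (l : 'rV[F]_4 -> Prop) : Prop :=
  exists t1 : L, (forall a : F, t1 <> a%:A) /\
    same_set l (fun x => span2 (Pt t1) (Pt (t1 ^+ #|F|)) (map_mx (in_alg L) x)).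

Definition chord (F : finFieldType) (L : fieldExtType F)
  (l : 'rV[F]_4 -> Prop) : Prop :=
  real_chord l \/ tangent_line l \/ imag_chord L l.

Definition Rmu (F : fieldType) (mu gamma : F) : 'rV[F]_4 := vec4 gamma mu gamma 1.
Definition Rinf (F : fieldType) : 'rV[F]_4 := vec4 1 0 1 0.
Definition ell (F : fieldType) (mu : F) : 'rV[F]_4 -> Prop :=
  span2 (Rmu mu 0) (Rinf F).

(* A point of l_mu is a R_{mu,0} + b R_{mu,oo} = (b, a mu, b, a).  If P(t) were such a
   point then a = 1, b = t, t^3 = t and t^2 = mu, so t (mu - 1) = 0 and mu is 0 or 1;
   P(oo) would need b = 1 and b = 0.  Real chords and tangents pass through points of
   the cubic, so they are not l_mu.  If R_{mu,oo} lay on the line joining P(t1), P(t2)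
   over an extension field, then t1 + t2 = 0 and t1^2 = 1, so t1 = 1 or -1 would be
   rational; hence no imaginary chord is l_mu.
   The statements on osculating planes are evaluations of their equations at R_{mu,0}
   and R_{mu,oo}. *)

From HB Require Import structures.
From mathcomp Require Import all_boot all_order all_algebra all_field.
From mathcomp Require Import ring.
Import GRing.Theory.
Set Implicit Arguments. Unset Strict Implicit. Unset Printing Implicit Defensive.
Local Open Scope ring_scope.

Lemma scale_vec4 (R : nzRingType) (c a b d e : R) :
  c *: vec4 a b d e = vec4 (c * a) (c * b) (c * d) (c * e).
Proof. by apply/rowP => -[[|[|[|[|i]]]] Hi]; rewrite !mxE //= mulr0. Qed.

Lemma add_vec4 (R : nzRingType) (a b c d a' b' c' d' : R) :
  vec4 a b c d + vec4 a' b' c' d' = vec4 (a + a') (b + b') (c + c') (d + d').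
Proof. by apply/rowP => -[[|[|[|[|i]]]] Hi]; rewrite !mxE //= addr0. Qed.

Lemma map_vec4 (R S : nzRingType) (f : R -> S) (a b c d : R) :
  map_mx f (vec4 a b c d) = vec4 (f a) (f b) (f c) (f d).
Proof. by apply/rowP => -[[|[|[|[|i]]]] Hi]; rewrite !mxE. Qed.

Lemma vec4_inj (R : nzRingType) (a b c d a' b' c' d' : R) :
  vec4 a b c d = vec4 a' b' c' d' -> [/\ a = a', b = b', c = c' & d = d'].
Proof.
move=> e; have coord i := congr1 (fun v : 'rV_4 => v ord0 (inord i)) e.
by have := coord 0%N; have := coord 1%N; have := coord 2%N; have := coord 3%N;
  rewrite !mxE !inordK.
Qed.

Lemma vec4_eq0 (R : nzRingType) (a b c d : R) :
  (vec4 a b c d == 0) = [&& a == 0, b == 0, c == 0 & d == 0].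
Proof.
have -> : 0 = vec4 0 0 0 0 :> 'rV[R]_4 by apply/rowP => -[[|[|[|[|i]]]] Hi]; rewrite !mxE.
by apply/eqP/and4P => [/vec4_inj[-> -> -> ->]|[/eqP-> /eqP-> /eqP-> /eqP->]]; rewrite ?eqxx.
Qed.

Lemma co_vec4 (R : nzRingType) (a b c d : R) (i : nat) : (i < 4)%N ->
  co (vec4 a b c d) i = nth 0 [:: a; b; c; d] i.
Proof. by move=> lt_i4; rewrite /co mxE inordK. Qed.

Lemma cpt_neq0 (R : fieldType) (s : option R) : cpt s != 0.
Proof. by case: s => [t|]; rewrite vec4_eq0 oner_eq0 /= ?andbF. Qed.

Lemma span2_left (R : fieldType) (u v : 'rV[R]_4) : u != 0 -> span2 u v u.
Proof. by split=> //; exists 1, 0; rewrite scale1r scale0r addr0. Qed.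

Lemma span2_right (R : fieldType) (u v : 'rV[R]_4) : v != 0 -> span2 u v v.
Proof. by split=> //; exists 0, 1; rewrite scale0r scale1r add0r. Qed.

Lemma real_chord_cpt (R : fieldType) (l : 'rV[R]_4 -> Prop) :
  real_chord l -> exists s, l (cpt s).
Proof. by case=> s1 [s2 [_ e]]; exists s1; apply/e/span2_left/cpt_neq0. Qed.

Lemma tangent_line_cpt (R : fieldType) (l : 'rV[R]_4 -> Prop) :
  tangent_line l -> exists s, l (cpt s).
Proof. by case=> s e; exists s; apply/e/span2_left/cpt_neq0. Qed.

Lemma map_mx_Rinf (F K : fieldType) (f : {rmorphism F -> K}) :
  map_mx f (Rinf F) = Rinf K.
Proof. by rewrite map_vec4 rmorph0 rmorph1. Qed.

Lemma Rinf_span2_Pt (K : fieldType) (t1 t2 : K) :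
  span2 (Pt t1) (Pt t2) (Rinf K) -> t1 ^+ 2 = 1.
Proof.
case=> _ [a [b]]; rewrite /Pt /Rinf !scale_vec4 add_vec4 !mulr1.
case/vec4_inj=> e3 e2 e1 e0.
have bE : b = - a by apply/eqP; rewrite -addr_eq0 addrC -e0.
subst b.
have sum0 : t1 + t2 = 0 by rewrite -[t1 + t2]mulr1 e1 e2; ring.
have {sum0} t2E : t2 = - t1 by apply/eqP; rewrite -addr_eq0 addrC sum0.
by rewrite t2E in e1 e3; rewrite [RHS]e3 -[t1 ^+ 2]mulr1 e1; ring.
Qed.

Section LineEll.

Variables (F : fieldType) (mu : F).

Lemma Rinf_neq0 : Rinf F != 0.
Proof. by rewrite vec4_eq0 oner_eq0. Qed.

Lemma Rmu_neq0 gamma : Rmu mu gamma != 0.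
Proof. by rewrite vec4_eq0 oner_eq0 !andbF. Qed.

Lemma ell_Rmu0 : ell mu (Rmu mu 0).
Proof. exact/span2_left/Rmu_neq0. Qed.

Lemma ell_Rinf : ell mu (Rinf F).
Proof. exact/span2_right/Rinf_neq0. Qed.

Lemma Rmu_decomp gamma : Rmu mu gamma = Rmu mu 0 + gamma *: Rinf F.
Proof. by rewrite scale_vec4 add_vec4 !mulr0 !mulr1 !addr0 !add0r. Qed.

Lemma ellE x :
  ell mu x <-> x != 0 /\
    ((exists gamma c, x = c *: Rmu mu gamma) \/ exists c, x = c *: Rinf F).
Proof.
split=> -[x_neq0 xE]; split=> //.
- case: xE => a [b ->]; have [-> | a_neq0] := eqVneq a 0.
    by right; exists b; rewrite scale0r add0r.
  left; exists (b / a), a.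
  by rewrite (Rmu_decomp (b / a)) scalerDr scalerA mulrCA mulfV ?mulr1.
- case: xE => [[gamma [c ->]] | [c ->]].
    by exists c, (c * gamma); rewrite Rmu_decomp scalerDr scalerA.
  by exists 0, c; rewrite scale0r add0r.
Qed.

Hypotheses (mu_neq0 : mu != 0) (mu_neq1 : mu != 1).

Lemma cpt_notin_ell s : ~ ell mu (cpt s).
Proof.
case=> _ [a [b]]; rewrite /Rmu /Rinf !scale_vec4 add_vec4.
rewrite !(mulr0, mulr1, addr0, add0r); case: s => [t|] /vec4_inj[] //=.
- move=> t3E t2E tE a1; rewrite -tE in t3E; rewrite -a1 mul1r in t2E.
  have : t * (mu - 1) = 0 by rewrite mulrBr mulr1 -t2E -exprS t3E subrr.
  move/eqP; rewrite mulf_eq0 subr_eq0 (negPf mu_neq1) orbF => /eqP t0.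
  by move: mu_neq0; rewrite -t2E t0 expr0n /= eqxx.
- by move=> <- _ /eqP; rewrite eq_sym oner_eq0.
Qed.

End LineEll.

Lemma not_imag_chord_ell (F : finFieldType) (L : fieldExtType F) (mu : F) :
  ~ imag_chord L (ell mu).
Proof.
case=> t1 [t1_notin_F e].
have /Rinf_span2_Pt : span2 (Pt t1) (Pt (t1 ^+ #|F|)) (Rinf L).
  by rewrite -(map_mx_Rinf (in_alg L)); apply/e/ell_Rinf.
move/eqP; rewrite sqrf_eq1 => /orP[]/eqP t1E.
- by apply: (t1_notin_F 1); rewrite t1E scale1r.
- by apply: (t1_notin_F (-1)); rewrite t1E scaleN1r.
Qed.

Lemma not_chord_ell (F : finFieldType) (L : fieldExtType F) (mu : F) :
  mu != 0 -> mu != 1 -> ~ chord L (ell mu).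
Proof.
move=> mu_neq0 mu_neq1.
case=> [/real_chord_cpt | [/tangent_line_cpt | ]]; last exact: not_imag_chord_ell.
all: by case=> s; apply: cpt_notin_ell.
Qed.

Lemma osc_Rinf (F : fieldType) (t : F) :
  osc (Some t) (Rinf F) <-> 3 * t ^+ 2 + 1 = 0.
Proof. by rewrite /osc !co_vec4 //= !mulr0 mulr1 !subr0 addrC. Qed.

Lemma osc_None_Rinf (F : fieldType) : osc None (Rinf F).
Proof. by rewrite /osc co_vec4. Qed.

Lemma osc_None_Rmu (F : fieldType) (mu gamma : F) : ~ osc None (Rmu mu gamma).
Proof. by rewrite /osc co_vec4 //=; apply/eqP/oner_neq0. Qed.

Lemma osc0_Rinf (F : fieldType) : ~ osc (Some 0) (Rinf F).
Proof. by rewrite osc_Rinf expr0n mulr0 add0r; apply/eqP/oner_neq0. Qed.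

Theorem lemma4p2 (F : finFieldType) (L : fieldExtType F)
  (hL : \dim {:L} = 2%N) (hq : (5 <= #|F|)%N) (mu : F)
  (hmu0 : mu != 0) (hmu1 : mu != 1) :
  (* description of l_mu *)
  same_set (ell mu)
    (fun x => x != 0 /\
       ((exists (gamma c : F), x = c *: Rmu mu gamma) \/ exists c : F, x = c *: Rinf F))
  (* (i) *)
  /\ (forall s : option F, ~ ell mu (cpt s))
  (* (ii) *)
  /\ ~ chord L (ell mu)
  (* (iii) *)
  /\ ~ (forall x, ell mu x -> osc None x)
  /\ ~ (forall x, ell mu x -> osc (Some 0) x)
  /\ (forall gamma : F, ~ osc None (Rmu mu gamma))
  /\ ~ osc (Some 0) (Rinf F)
  /\ osc None (Rinf F)
  (* (iv) *)
  /\ ((forall t : F, ~ osc (Some t) (Rinf F)) ->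
        forall s : option F, ~ (forall x, ell mu x -> osc s x))
  (* (v) *)
  /\ (forall t : F, osc (Some t) (Rinf F) <-> 3 * t ^+ 2 + 1 = 0).
Proof.
split; first exact: ellE.
split; first exact: cpt_notin_ell.
split; first exact: not_chord_ell.
split; first by move/(_ _ (ell_Rmu0 mu)); apply: osc_None_Rmu.
split; first by move/(_ _ (ell_Rinf mu)); apply: osc0_Rinf.
split; first exact: osc_None_Rmu.
split; first exact: osc0_Rinf.
split; first exact: osc_None_Rinf.
split; last exact: osc_Rinf.
move=> Rinf_notin_osc [t|] ell_in_osc.
- exact/(Rinf_notin_osc t)/ell_in_osc/ell_Rinf.
- exact/(@osc_None_Rmu F mu 0)/ell_in_osc/ell_Rmu0.
Qed.
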